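(* Let $\mathfrak g$ be a finite-dimensional simple Lie algebra (take $\epsilon=1$) or an affine Kac–Moody algebra (take $\epsilon=0$), with Chevalley generators $\{e_i,f_i,h_i\}_{i=\epsilon}^{r}$, simple roots $\alpha_i$, invariant symmetric bilinear form $(\cdot|\cdot)$, Weyl vector $\rho$ (with $(\rho|\alpha_i)=\tfrac12(\alpha_i|\alpha_i)$) and positive root cone $Q_+=\bigoplus_i\mathbb{Z}_{\ge0}\alpha_i$. Let $V_\lambda$ be the Verma module with highest weight vector $|\lambda\rangle$, and assume $\lambda$ is such that $$v(\gamma):=(\lambda+\rho\,|\,\gamma)-\tfrac12(\gamma|\gamma)\neq0\quad\text{for all }\gamma\in Q_+\setminus\{0\}.$$ For a word $(i_1,\dots,i_k)$ in $[\epsilon,r]$, associate the lattice path $p$ in $Q_+$ starting at $0$ whose successive steps are $\alpha_{i_k},\alpha_{i_{k-1}},\dots,\alpha_{i_1}$, ending at $\beta=\sum_j\alpha_{i_j}$, and put $|p\rangle=f_{i_1}f_{i_2}\cdots f_{i_k}|\lambda\rangle$ and $$w(p)=\prod_{\gamma}\frac{1}{v(\gamma)},$$ the product being over the vertices $\gamma\neq0$ of $p$ (i.e. the $k$ points reached after each step, including the endpoint). Then for any parameters $\mu_\epsilon,\dots,\mu_r$, the element of the completion of $V_\lambda$ $$v_{\lambda,\mu}=\sum_{\beta\in Q_+}\prod_i\mu_i^{\beta_i}\sum_{p:0\to\beta}w(p)\,|p\rangle,$$ where $\beta=\sum_i\beta_i\alpha_i$ and the inner sum is over all such paths from $0$ to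 $\beta$, satisfies $e_i\,v_{\lambda,\mu}=\mu_i\,v_{\lambda,\mu}$ for all $i\in[\epsilon,r]$, i.e. it is the Whittaker vector normalized so that the coefficient of $|\lambda\rangle$ is $1$.
   Context: A Whittaker vector with parameters $\mu_i$ in (the completion of) $V_\lambda$ is a vector $v$ with $e_iv=\mu_iv$ for all $i$; it is unique up to normalization. The vectors $|p\rangle$ are not linearly independent; the formula is an expansion on these words. *)

From HB Require Import structures.
From mathcomp Require Import all_boot all_order all_algebra.
Set Implicit Arguments. Unset Strict Implicit. Unset Printing Implicit Defensive.
Import Order.TTheory GRing.Theory Num.Theory.
Local Open Scope ring_scope.

(* Elements of Q_+ are coordinate vectors beta = (beta_i)_i : I -> nat,
   standing for sum_i beta_i alpha_i. *)

(* content of a word: the element of Q_+ reached by the lattice path of the word *)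
Definition content (I : finType) (s : seq I) : {ffun I -> nat} :=
  [ffun i => count_mem i s].

Definition addroot (I : finType) (beta : {ffun I -> nat}) (i : I) : {ffun I -> nat} :=
  [ffun j => (beta j + (j == i))%N].

Definition rootvec (K : fieldType) (H : lmodType K) (I : finType)
  (alpha : I -> H) (beta : {ffun I -> nat}) : H :=
  \sum_i (beta i)%:R *: alpha i.

Definition vfun (K : fieldType) (H : lmodType K) (form : H -> H -> K)
  (I : finType) (alpha : I -> H) (lambda rho : H) (gamma : {ffun I -> nat}) : K :=
  form (lambda + rho) (rootvec alpha gamma)
  - form (rootvec alpha gamma) (rootvec alpha gamma) / 2%:R.

(* w(p) for the path p of the word s = (i_1,...,i_k): its vertices != 0 are the
   contents of the nonempty suffixes (i_{m+1},...,i_k), m = 0..k-1. *)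
Definition wpath (K : fieldType) (H : lmodType K) (form : H -> H -> K)
  (I : finType) (alpha : I -> H) (lambda rho : H) (s : seq I) : K :=
  \prod_(m < size s) (vfun form alpha lambda rho (content (drop m s)))^-1.

Definition ket (K : fieldType) (V : lmodType K) (I : finType)
  (f : I -> V -> V) (vl : V) (s : seq I) : V :=
  foldr (fun i x => f i x) vl s.

(* the degree-beta component of v_{lambda,mu}:
   prod_i mu_i^{beta_i} sum_{p : 0 -> beta} w(p) |p>  *)
Definition whit_comp (K : fieldType) (H : lmodType K) (form : H -> H -> K)
  (I : finType) (alpha : I -> H) (lambda rho : H)
  (V : lmodType K) (f : I -> V -> V) (vl : V) (mu : I -> K)
  (beta : {ffun I -> nat}) : V :=
  (\prod_i mu i ^+ beta i) *:
  \sum_(t : (\sum_i beta i)%N.-tuple I | content t == beta)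
     wpath form alpha lambda rho t *: ket f vl t.

From HB Require Import structures.
From mathcomp Require Import all_boot all_order all_algebra.
From mathcomp Require Import ring zify.
Import Order.TTheory GRing.Theory Num.Theory.
Set Implicit Arguments. Unset Strict Implicit. Unset Printing Implicit Defensive.
Local Open Scope ring_scope.

(* Let W_n(b) be the sum of w(p)|p> over the words of length n and content b.
   Peeling off the first letter gives v(g) W_{n+1}(g) = sum_{g_j > 0} f_j W_n(g - alpha_j).
   W_n(b) has weight lambda - b, so h_i acts on it by the scalar
   (lambda - b | alpha_i) = v(b + alpha_i) - v(b).  Pushing e_i through the f_j
   with [e_i, f_j] = delta_ij h_i, induction on n yields
   v(b + alpha_i) e_i W_{n+1}(b + alpha_i) = (v(b) + (lambda - b | alpha_i)) W_n(b),
   hence e_i W_{n+1}(b + alpha_i) = W_n(b) by genericity; similarly e_i W_n(b) = 0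
   when b_i = 0. *)

Lemma big_tuple_cons (R : Type) (idx : R) (op : Monoid.com_law idx)
    (I : finType) n (P : pred (seq I)) (F : seq I -> R) :
  \big[op/idx]_(t : n.+1.-tuple I | P t) F t
  = \big[op/idx]_(j : I) \big[op/idx]_(t : n.-tuple I | P (j :: t)) F (j :: t).
Proof.
rewrite pair_big_dep (reindex (fun t : n.+1.-tuple I => (thead t, behead_tuple t))) /=.
  by apply: eq_big => t; rewrite [t in LHS]tuple_eta.
exists (fun p => cons_tuple p.1 p.2) => [t _|[j t] _] /=.
  by rewrite [RHS]tuple_eta; apply: val_inj.
by rewrite theadE; congr pair; apply: val_inj.
Qed.

Section RootLattice.
Variable I : finType.
Implicit Types (b g : {ffun I -> nat}) (i j : I).

Lemma sum_addroot b i : (\sum_k addroot b i k = (\sum_k b k).+1)%N.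
Proof.
have delta_i : (\sum_k ((k == i) : nat) = 1)%N.
  by rewrite (bigD1 i) //= eqxx big1 // => k /negbTE ->.
by under eq_bigr do rewrite ffunE; rewrite big_split /= delta_i addn1.
Qed.

Lemma prod_addroot (R : comNzRingType) (mu : I -> R) b i :
  \prod_k mu k ^+ addroot b i k = mu i * \prod_k mu k ^+ b k.
Proof.
under eq_bigr do rewrite ffunE exprD.
rewrite big_split /= mulrC (bigD1 i) //= eqxx expr1 big1 ?mulr1 // => k /negbTE ->.
by rewrite expr0.
Qed.

(* b - alpha_j; truncated, so it is only meaningful when 0 < b j *)
Definition subroot b j : {ffun I -> nat} :=
  [ffun k => (b k - (k == j))%N].

Lemma eq_addroot b g j : (addroot b j == g) = (0 < g j)%N && (b == subroot g j).
Proof.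
apply/eqP/andP => [<-|[g_j /eqP ->]].
  rewrite !ffunE eqxx addn1; split => //; apply/eqP/ffunP => k; rewrite !ffunE.
  by case: (k == j) => /=; lia.
by apply/ffunP => k; rewrite !ffunE; case: eqP => [->|_] /=; lia.
Qed.

Lemma addrootK j : cancel (fun b => addroot b j) (fun g => subroot g j).
Proof. by move=> b; apply/ffunP => k; rewrite !ffunE; case: (k == j) => /=; lia. Qed.

Lemma subroot_addrootC b i j :
  (0 < b j)%N -> subroot (addroot b i) j = addroot (subroot b j) i.
Proof.
move=> b_j; apply/ffunP => k; rewrite !ffunE.
by case: (eqVneq k j) => [->|_]; case: (k == i) => /=; lia.
Qed.

Lemma addroot_neq0 b i : addroot b i != 0.
Proof. by apply/eqP => /ffunP/(_ i); rewrite !ffunE eqxx addn1. Qed.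

Lemma content_nil : content ([::] : seq I) = 0.
Proof. by apply/ffunP => k; rewrite !ffunE. Qed.

Lemma content_cons j (s : seq I) : content (j :: s) = addroot (content s) j.
Proof. by apply/ffunP => k; rewrite !ffunE /= addnC eq_sym. Qed.

End RootLattice.

Section Whittaker.
Variables (K : numClosedFieldType) (H : lmodType K) (form : H -> H -> K).
Hypothesis form_linl :
  forall (a : K) (x y z : H), form (a *: x + y) z = a * form x z + form y z.
Hypothesis form_sym : forall x y : H, form x y = form y x.
Variables (I : finType) (alpha : I -> H) (rho lambda : H).
Hypothesis hrho : forall i, form rho (alpha i) = form (alpha i) (alpha i) / 2%:R.
Hypothesis hgen : forall gamma : {ffun I -> nat},
  gamma != 0 -> vfun form alpha lambda rho gamma != 0.
Variables (V : lmodType K) (e f h : I -> {linear V -> V}) (vl : V).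
Hypothesis hef : forall i j x, e i (f j x) - f j (e i x) = (i == j)%:R *: h i x.
Hypothesis hhf :
  forall i j x, h i (f j x) - f j (h i x) = - form (alpha i) (alpha j) *: f j x.
Hypothesis hevl : forall i, e i vl = 0.
Hypothesis hhvl : forall i, h i vl = form lambda (alpha i) *: vl.

Implicit Types (b g : {ffun I -> nat}) (i j : I).

Local Notation v := (vfun form alpha lambda rho).
Local Notation w := (wpath form alpha lambda rho).
Local Notation ket := (ket (fun j => f j) vl).

Lemma form_addl x y z : form (x + y) z = form x z + form y z.
Proof. by have := form_linl 1 x y z; rewrite scale1r mul1r. Qed.

Lemma form_addr x y z : form x (y + z) = form x y + form x z.
Proof. by rewrite form_sym form_addl !(form_sym x). Qed.

Lemma form0l z : form 0 z = 0.
Proof. by apply: (@addrI _ (form 0 z)); rewrite -form_addl !addr0. Qed.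

Lemma rootvec0 : rootvec alpha (0 : {ffun I -> nat}) = 0.
Proof. by rewrite /rootvec big1 // => k _; rewrite ffunE scale0r. Qed.

Lemma rootvec_addroot b i : rootvec alpha (addroot b i) = rootvec alpha b + alpha i.
Proof.
rewrite /rootvec; under eq_bigr do rewrite ffunE natrD scalerDl.
rewrite big_split /=; congr (_ + _).
by rewrite (bigD1 i) //= eqxx scale1r big1 ?addr0 // => k /negbTE ->; rewrite scale0r.
Qed.

Definition hval b i := form lambda (alpha i) - form (rootvec alpha b) (alpha i).

Lemma vfun0 : v 0 = 0.
Proof. by rewrite /vfun rootvec0 form_sym !form0l mul0r subr0. Qed.

Lemma vfun_addroot b i : v (addroot b i) = v b + hval b i.
Proof.
rewrite /vfun /hval rootvec_addroot !form_addl !form_addr hrho (form_sym (alpha i)).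
have two_neq0 : (2%:R : K) != 0 by rewrite pnatr_eq0.
by field.
Qed.

Lemma h_ket i s : h i (ket s) = hval (content s) i *: ket s.
Proof.
elim: s => [|j s IHs] /=; first by rewrite hhvl content_nil /hval rootvec0 form0l subr0.
move/eqP: (hhf i j (ket s)); rewrite subr_eq => /eqP ->.
rewrite IHs linearZ -scalerDl content_cons /hval rootvec_addroot form_addl.
by rewrite (form_sym (alpha j)); congr (_ *: _); ring.
Qed.

Lemma e_f i j x : e i (f j x) = f j (e i x) + (i == j)%:R *: h i x.
Proof. by apply/eqP; rewrite addrC -subr_eq hef. Qed.

Lemma e_sum_f i (P : pred I) (x : I -> V) :
  e i (\sum_(j | P j) f j (x j))
  = \sum_(j | P j) f j (e i (x j)) + (if P i then h i (x i) else 0).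
Proof.
rewrite linear_sum; under eq_bigr do rewrite e_f.
rewrite big_split /=; congr (_ + _).
rewrite big_mkcond (bigD1 i) //= eqxx scale1r big1 ?addr0 => [|j /negbTE].
  by case: (P i).
by rewrite eq_sym => ->; rewrite scale0r if_same.
Qed.

(* W_n(b); it vanishes unless n is the height of b *)
Definition wsum n b : V :=
  \sum_(t : n.-tuple I | content t == b) w t *: ket t.

Lemma whit_compE mu b :
  whit_comp form alpha lambda rho (fun j => f j) vl mu b
  = (\prod_i mu i ^+ b i) *: wsum (\sum_i b i) b.
Proof. by []. Qed.

Lemma h_wsum i n b : h i (wsum n b) = hval b i *: wsum n b.
Proof.
rewrite linear_sum scaler_sumr; apply: eq_bigr => t /eqP <-.
by rewrite linearZ /= h_ket !scalerA mulrC.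
Qed.

Lemma wsum0 b : wsum 0 b = if b == 0 then vl else 0.
Proof.
rewrite /wsum big_mkcond (eq_bigr (fun _ => if b == 0 then vl else 0)).
  by rewrite sumr_const card_tuple expn0 mulr1n.
move=> t _; rewrite tuple0 /= content_nil eq_sym.
by case: ifP => // _; rewrite /wpath big_ord0 scale1r.
Qed.

Lemma e_wsum0 i b : e i (wsum 0 b) = 0.
Proof. by rewrite wsum0; case: ifP; rewrite ?hevl ?linear0. Qed.

Lemma wpath_cons j s : w (j :: s) = (v (content (j :: s)))^-1 * w s.
Proof. by rewrite /wpath /= big_ord_recl. Qed.

Lemma wsum_succ n g :
  wsum n.+1 g = (v g)^-1 *: \sum_(j | (0 < g j)%N) f j (wsum n (subroot g j)).
Proof.
rewrite /wsum (big_tuple_cons _ n (fun s => content s == g) (fun s => w s *: ket s)).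
rewrite scaler_sumr [RHS]big_mkcond; apply: eq_bigr => j _.
case: ifP => g_j; last first.
  by rewrite big_pred0 // => t; rewrite content_cons eq_addroot g_j.
rewrite linear_sum scaler_sumr; apply: eq_big => [t|t /eqP t_g].
  by rewrite content_cons eq_addroot g_j.
by rewrite wpath_cons t_g linearZ scalerA.
Qed.

Lemma scale_vfun_wsum n g :
  v g *: wsum n.+1 g = \sum_(j | (0 < g j)%N) f j (wsum n (subroot g j)).
Proof.
have [->|g_neq0] := eqVneq g 0; last by rewrite wsum_succ scalerA mulfV ?scale1r ?hgen.
by rewrite vfun0 scale0r big_pred0 // => j; rewrite ffunE.
Qed.

Lemma e_wsum_eq0 i n b : b i = 0%N -> e i (wsum n b) = 0.
Proof.
elim: n b => [|n IHn] b b_i; first exact: e_wsum0.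
rewrite wsum_succ linearZ e_sum_f b_i /= addr0 big1 ?scaler0 // => j b_j.
have j_neq_i : (i == j) = false by apply: contraTF b_j => /eqP <-; rewrite b_i.
by rewrite IHn ?linear0 // ffunE b_i j_neq_i.
Qed.

Lemma scale_vfun_e_wsum i n b (g := addroot b i) :
  v g *: e i (wsum n.+1 g)
  = \sum_(j | (0 < g j)%N) f j (e i (wsum n (subroot g j))) + hval b i *: wsum n b.
Proof.
rewrite -[LHS]linearZ scale_vfun_wsum e_sum_f /g !ffunE eqxx addn1 addrootK.
by rewrite h_wsum.
Qed.

Lemma e_wsum_addroot i n b : e i (wsum n.+1 (addroot b i)) = wsum n b.
Proof.
elim: n b => [|n IHn] b; apply: (scalerI (hgen (addroot_neq0 b i)));
  rewrite scale_vfun_e_wsum vfun_addroot [RHS]scalerDl; congr (_ + _).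
  rewrite big1 => [|j _]; last by rewrite e_wsum0 linear0.
  by rewrite wsum0; case: eqP => [->|_]; rewrite ?vfun0 ?scale0r ?scaler0.
rewrite scale_vfun_wsum big_mkcond [RHS]big_mkcond; apply: eq_bigr => j _ /=.
have [b_j|b_j] := posnP (b j); last by rewrite ffunE ltn_addr // subroot_addrootC // IHn.
rewrite ffunE b_j; case: (eqVneq j i) b_j => [-> b_i|_ _] //.
by rewrite addrootK e_wsum_eq0 ?linear0.
Qed.

End Whittaker.

Theorem theorem4p1
  (K : numClosedFieldType)
  (* h^* with the invariant symmetric bilinear form ( . | . ) *)
  (H : lmodType K) (form : H -> H -> K)
  (form_linl : forall (a : K) (x y z : H),
      form (a *: x + y) z = a * form x z + form y z)
  (form_sym : forall x y : H, form x y = form y x)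
  (* index set [epsilon, r] and simple roots *)
  (I : finType) (alpha : I -> H)
  (* Weyl vector *)
  (rho : H) (hrho : forall i, form rho (alpha i) = form (alpha i) (alpha i) / 2%:R)
  (* highest weight, generic *)
  (lambda : H)
  (hgen : forall gamma : {ffun I -> nat},
      gamma != 0 -> vfun form alpha lambda rho gamma != 0)
  (* module with Chevalley-type operators and highest weight vector |lambda> *)
  (V : lmodType K) (e f h : I -> {linear V -> V}) (vl : V)
  (hef : forall i j x, e i (f j x) - f j (e i x) = (i == j)%:R *: h i x)
  (hhe : forall i j x, h i (e j x) - e j (h i x) = form (alpha i) (alpha j) *: e j x)
  (hhf : forall i j x, h i (f j x) - f j (h i x) = - form (alpha i) (alpha j) *: f j x)
  (hhh : forall i j x, h i (h j x) = h j (h i x))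
  (hevl : forall i, e i vl = 0)
  (hhvl : forall i, h i vl = form lambda (alpha i) *: vl)
  (* parameters *)
  (mu : I -> K) :
  (* e_i v = mu_i v in the completion prod_{beta in Q_+} V_{lambda - beta},
     written degree by degree *)
  (forall (i : I) (beta : {ffun I -> nat}),
      e i (whit_comp form alpha lambda rho (fun j => f j) vl mu (addroot beta i))
      = mu i *: whit_comp form alpha lambda rho (fun j => f j) vl mu beta)
  /\
  (forall (i : I) (beta : {ffun I -> nat}), beta i = 0%N ->
      e i (whit_comp form alpha lambda rho (fun j => f j) vl mu beta) = 0).
Proof.
split=> [i b|i b b_i]; rewrite !whit_compE linearZ /=.
  rewrite sum_addroot prod_addroot scalerA.
  by rewrite (e_wsum_addroot form_linl form_sym hrho hgen hef hhf hevl hhvl).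
by rewrite (e_wsum_eq0 form alpha rho lambda hef hevl) ?scaler0.
Qed.
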